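(* Let $\beta>0$ be a constant and let $x_{1:n}\in\mathcal X^n$ ($n\ge 1$) be any sequence, with used alphabet $\mathcal A$ of size $m$ and counts $n_j$. Then the redundancy of $S^\beta$ satisfies the exact identity $$R^\beta_S(x_{1:n}) = \mathrm{CL}_w(\mathcal A) - m\ln\beta + \sum_{j\in\mathcal A}\ln\frac{n_j^{n_j}}{\Gamma(n_j)} + \ln\frac{\Gamma(n+\beta)}{n^n\,\Gamma(\beta)},$$ and the upper bound $R^\beta_S(x_{1:n})\le \overline R^\beta_S$, where $$\overline R^\beta_S := \mathrm{CL}_w(\mathcal A) - m\ln\beta + \sum_{j\in\mathcal A}\tfrac12\ln\frac{n_j}{2\pi} + n\ln\Big(1+\frac{\beta}{n}\Big) + \Big(\beta-\tfrac12\Big)\ln\Big(\frac{n}{\beta}+1\Big) + \big(1-\ln\sqrt{2\pi}\big).$$ If moreover $\beta\ge 1$, then also $R^\beta_S(x_{1:n})\ge \overline R^\beta_S - (1-\ln\sqrt{2\pi})(m+2)$.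
   Context: Let $\mathcal X$ be a finite base alphabet with $D=|\mathcal X|$. For a sequence $x_{1:n}=(x_1,\dots,x_n)\in\mathcal X^n$, let $n_i$ be the number of occurrences of $i$ in $x_{1:n}$, $\mathcal A=\{x_1,\dots,x_n\}$ the set of used symbols and $m=|\mathcal A|$. For $0\le t\le n$ let $\mathcal A_t=\{x_1,\dots,x_t\}$ ($\mathcal A_0=\emptyset$), $m_t=|\mathcal A_t|$, and $n^t_i$ the number of occurrences of $i$ in $x_{1:t}$. New-symbol weights: for each $t$ and each $i\in\mathcal X\setminus\mathcal A_t$ a number $w^t_i>0$ with $\sum_{k\in\mathcal X\setminus\mathcal A_t}w^t_k\le 1$. For a constant $\beta>0$ the model $S^\beta$ is defined by $S^\beta(x_{t+1}=i\mid x_{1:t})=n^t_i/(t+\beta)$ if $n^t_i>0$ and $=\beta w^t_i/(t+\beta)$ if $n^t_i=0$ ($t=0,\dots,n-1$), and $S^\beta(x_{1:n})=\prod_{t=0}^{n-1}S^\beta(x_{t+1}\mid x_{1:t})$. Define $\mathrm{CL}_w(\mathcal A):=\sum_{t\in\{0,\dots,n-1\}:\,x_{t+1}\notin\mathcal A_t}\ln(1/w^t_{x_{t+1}})$. The redundancy of a (sub)probability $Q$ on sequences relative to the i.i.d. class is $R_Q(x_{1:n}) := \ln\frac{\max_{\theta}\prod_{t=1}^n\theta_{x_t}}{Q(x_{1:n})} = \ln\frac{n^{-n}\prod_{j\in\mathcal A}n_j^{n_j}}{Q(x_{1:n})}$, the max over probability vectors $\theta$ on $\mathcal X$; $R^\beta_S:=R_{S^\beta}$.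 All logarithms are natural. *)

From Stdlib Require Import Arith Reals Lra Lia ClassicalEpsilon List.
Open Scope R_scope.

Fixpoint rsum (k : nat) (f : nat -> R) : R :=
  match k with O => 0 | S k' => rsum k' f + f k' end.
Fixpoint rprod (k : nat) (f : nat -> R) : R :=
  match k with O => 1 | S k' => rprod k' f * f k' end.

(** Euler's Gamma function, defined (for x > 0) as the limit of Gauss'
    product  k! k^x / (x (x+1) ... (x+k)). *)
Definition gauss_seq (x : R) (k : nat) : R :=
  INR (Factorial.fact k) * Rpower (INR k) x / rprod (S k) (fun i => x + INR i).
Definition Gamma (x : R) : R :=
  epsilon (inhabits 0) (fun g => Un_cv (gauss_seq x) g).

(** The alphabet is {0, ..., D-1}; a sequence x_{1:n} is encoded as
    x : nat -> nat, with x_{t+1} = x t for t = 0..n-1. *)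

Fixpoint cnt (x : nat -> nat) (t i : nat) : nat :=
  match t with
  | O => O
  | S t' => (cnt x t' i + (if Nat.eqb (x t') i then 1 else 0))%nat
  end.

Definition sumA (D n : nat) (x : nat -> nat) (f : nat -> R) : R :=
  rsum D (fun j => if Nat.ltb 0 (cnt x n j) then f j else 0).
Definition prodA (D n : nat) (x : nat -> nat) (f : nat -> R) : R :=
  rprod D (fun j => if Nat.ltb 0 (cnt x n j) then f j else 1).

Definition msize (D n : nat) (x : nat -> nat) : nat :=
  length (List.filter (fun j => Nat.ltb 0 (cnt x n j)) (List.seq 0 D)).

Definition Scond (beta : R) (w : nat -> nat -> R) (x : nat -> nat) (t : nat) : R :=
  if Nat.ltb 0 (cnt x t (x t))
  then INR (cnt x t (x t)) / (INR t + beta)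
  else beta * w t (x t) / (INR t + beta).

Definition Sbeta (beta : R) (w : nat -> nat -> R) (x : nat -> nat) (n : nat) : R :=
  rprod n (Scond beta w x).

Definition CLw (w : nat -> nat -> R) (x : nat -> nat) (n : nat) : R :=
  rsum n (fun t => if Nat.eqb (cnt x t (x t)) 0 then ln (/ w t (x t)) else 0).

Definition redundancy (D n : nat) (x : nat -> nat) (Q : R) : R :=
  ln (/ (INR n ^ n) * prodA D n x (fun j => INR (cnt x n j) ^ (cnt x n j)) / Q).

Definition RS (D : nat) (beta : R) (w : nat -> nat -> R) (x : nat -> nat) (n : nat) : R :=
  redundancy D n x (Sbeta beta w x n).

Definition RSbar (D : nat) (beta : R) (w : nat -> nat -> R) (x : nat -> nat) (n : nat) : R :=
  CLw w x n - INR (msize D n x) * ln beta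
  + sumA D n x (fun j => / 2 * ln (INR (cnt x n j) / (2 * PI)))
  + INR n * ln (1 + beta / INR n)
  + (beta - / 2) * ln (INR n / beta + 1)
  + (1 - ln (sqrt (2 * PI))).

Definition weights_ok (D n : nat) (x : nat -> nat) (w : nat -> nat -> R) : Prop :=
  forall t, (t <= n)%nat ->
    (forall i, (i < D)%nat -> cnt x t i = O -> 0 < w t i) /\
    rsum D (fun i => if Nat.eqb (cnt x t i) 0 then w t i else 0) <= 1.

From Stdlib Require Import Reals Lra Lia List ClassicalEpsilon Factorial.
From Coquelicot Require Import Coquelicot.
Open Scope R_scope.

(* Each factor of S^beta(x_{1:n}) is a numerator over t + beta.
   Grouping the numerators by symbol, the occurrences of j contribute
   beta w (first occurrence) times 1 * 2 * ... * (n_j - 1) = Gamma(n_j); the weights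
   give CL_w(A), and prod_{t<n} (t + beta) = Gamma(n + beta) / Gamma(beta).

   Write la k = ln k! + k - (k + 1/2) ln k for the Stirling remainder and
   dd z = (z + 1/2) ln(1 + 1/z) - 1 >= 0 for the defect of one factor, so that
   la (k+1) = la k - dd k.  With c = ln sqrt(2 pi) the exact identity becomes
       R = Rbar - sum_{j in A} (la n_j - c) - sum_{t<n} dd (beta + t) - (1 - c).
   The upper bound follows from c <= la k (Stirling, via Wallis' inequality and a
   doubling argument) and c <= 1; the lower bound for beta >= 1 from la k <= 1 and,
   since dd decreases, sum_t dd (beta + t) <= sum_t dd (1 + t) = 1 - la (n+1) <= 1 - c. *)

Lemma rsum_S k f : rsum (S k) f = rsum k f + f k.
Proof. reflexivity. Qed.

Lemma rprod_S k f : rprod (S k) f = rprod k f * f k.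
Proof. reflexivity. Qed.

Lemma rsum_ext k f g : (forall i, (i < k)%nat -> f i = g i) -> rsum k f = rsum k g.
Proof. induction k; intros H; simpl; auto. rewrite IHk, H; auto. Qed.

Lemma rsum_le k f g : (forall i, (i < k)%nat -> f i <= g i) -> rsum k f <= rsum k g.
Proof.
  induction k; intros H; simpl; [lra|].
  specialize (IHk ltac:(auto)). specialize (H k ltac:(lia)). lra.
Qed.

Lemma rsum_plus k f g : rsum k (fun i => f i + g i) = rsum k f + rsum k g.
Proof. induction k; simpl; [ring|]. rewrite IHk; ring. Qed.

Lemma rsum_minus k f g : rsum k (fun i => f i - g i) = rsum k f - rsum k g.
Proof. induction k; simpl; [ring|]. rewrite IHk; ring. Qed.

Lemma rsum_scal k c f : rsum k (fun i => c * f i) = c * rsum k f.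
Proof. induction k; simpl; [ring|]. rewrite IHk; ring. Qed.

Lemma rsum_const k c : rsum k (fun _ => c) = c * INR k.
Proof. induction k; [simpl; ring|]. rewrite rsum_S, IHk, S_INR; ring. Qed.

Lemma rsum_shift0 k f : rsum (S k) f = f 0%nat + rsum k (fun i => f (S i)).
Proof. induction k; simpl; [ring|]. simpl in IHk. rewrite IHk. ring. Qed.

Lemma rprod_pos k f : (forall i, (i < k)%nat -> 0 < f i) -> 0 < rprod k f.
Proof. induction k; intros H; simpl; [lra|]. apply Rmult_lt_0_compat; auto. Qed.

Lemma ln_rprod k f : (forall i, (i < k)%nat -> 0 < f i) ->
  ln (rprod k f) = rsum k (fun i => ln (f i)).
Proof.
  induction k; intros H; simpl; [apply ln_1|].
  rewrite ln_mult; [rewrite IHk; auto | apply rprod_pos; auto | auto].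
Qed.

Lemma INR_pos1 k : (1 <= k)%nat -> 0 < INR k.
Proof. intros; apply lt_0_INR; lia. Qed.

(** * Sums over the used alphabet *)

Lemma rsum_delta D a (g : nat -> R) :
  rsum D (fun j => if Nat.eqb a j then g j else 0) = if Nat.ltb a D then g a else 0.
Proof.
  induction D; simpl; [destruct (Nat.ltb_spec a 0); auto; lia|].
  rewrite IHD. destruct (Nat.ltb_spec a D), (Nat.eqb_spec a D), (Nat.ltb_spec a (S D));
    subst; try lia; ring.
Qed.

(* Regrouping a sum over time steps by symbol: the step t contributes
   phi (n^t_{x_{t+1}}), and the occurrences of j contribute phi 0, ..., phi (n_j - 1). *)
Lemma sum_steps_by_symbol D n x (phi : nat -> R) :
  (forall t, (t < n)%nat -> (x t < D)%nat) ->
  rsum n (fun t => phi (cnt x t (x t))) = rsum D (fun j => rsum (cnt x n j) phi).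
Proof.
  induction n; intros Hx.
  - simpl. clear Hx. induction D; simpl; [reflexivity|rewrite <- IHD; ring].
  - rewrite rsum_S, IHn by auto.
    transitivity (rsum D (fun j => rsum (cnt x n j) phi
                                   + (if Nat.eqb (x n) j then phi (cnt x n j) else 0))).
    + rewrite rsum_plus, rsum_delta.
      destruct (Nat.ltb_spec (x n) D); [ring|specialize (Hx n ltac:(lia)); lia].
    + apply rsum_ext. intros j _. simpl. destruct (Nat.eqb (x n) j).
      * rewrite Nat.add_1_r, rsum_S. ring.
      * rewrite Nat.add_0_r. ring.
Qed.

Lemma msize_rsum D n x :
  INR (msize D n x) = rsum D (fun j => if Nat.ltb 0 (cnt x n j) then 1 else 0).
Proof.
  unfold msize. induction D; [reflexivity|].
  rewrite seq_S, filter_app, length_app, plus_INR, IHD, rsum_S. simpl.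
  destruct (Nat.ltb 0 (cnt x n D)); simpl; ring.
Qed.

Section SumOverAlphabet.
Variables (D n : nat) (x : nat -> nat).

Lemma sumA_ext f g : (forall j, (j < D)%nat -> (0 < cnt x n j)%nat -> f j = g j) ->
  sumA D n x f = sumA D n x g.
Proof.
  intros H. unfold sumA. apply rsum_ext. intros i Hi.
  destruct (Nat.ltb_spec 0 (cnt x n i)); auto.
Qed.

Lemma sumA_le f g : (forall j, (j < D)%nat -> (0 < cnt x n j)%nat -> f j <= g j) ->
  sumA D n x f <= sumA D n x g.
Proof.
  intros H. unfold sumA. apply rsum_le. intros i Hi.
  destruct (Nat.ltb_spec 0 (cnt x n i)); auto; lra.
Qed.

Lemma sumA_plus f g : sumA D n x (fun j => f j + g j) = sumA D n x f + sumA D n x g.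
Proof.
  unfold sumA. rewrite <- rsum_plus. apply rsum_ext. intros.
  destruct (Nat.ltb 0 (cnt x n i)); ring.
Qed.

Lemma sumA_minus f g : sumA D n x (fun j => f j - g j) = sumA D n x f - sumA D n x g.
Proof.
  unfold sumA. rewrite <- rsum_minus. apply rsum_ext. intros.
  destruct (Nat.ltb 0 (cnt x n i)); ring.
Qed.

Lemma sumA_const c : sumA D n x (fun _ => c) = c * INR (msize D n x).
Proof.
  unfold sumA. rewrite msize_rsum, <- rsum_scal. apply rsum_ext. intros.
  destruct (Nat.ltb 0 (cnt x n i)); ring.
Qed.

Lemma sumA_cnt : (forall t, (t < n)%nat -> (x t < D)%nat) ->
  sumA D n x (fun j => INR (cnt x n j)) = INR n.
Proof.
  intros Hx. pose proof (sum_steps_by_symbol D n x (fun _ => 1) Hx) as H.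
  cbv beta in H. rewrite rsum_const in H.
  rewrite (rsum_ext D _ (fun j => INR (cnt x n j))) in H
    by (intros; rewrite rsum_const; ring).
  unfold sumA. rewrite (rsum_ext D _ (fun j => INR (cnt x n j))); [lra|].
  intros j _. destruct (Nat.ltb_spec 0 (cnt x n j)); auto.
  replace (cnt x n j) with 0%nat by lia. reflexivity.
Qed.

End SumOverAlphabet.

(** * Elementary logarithmic inequalities *)

Lemma le_of_derive_nonneg (f f' : R -> R) a b : a <= b ->
  (forall c, a <= c <= b -> is_derive f c (f' c)) ->
  (forall c, a <= c <= b -> 0 <= f' c) -> f a <= f b.
Proof.
  intros Hab Hd Hp. destruct (Rle_lt_or_eq_dec _ _ Hab) as [H|H]; [|subst; lra].
  destruct (MVT_cor2 f f' a b H) as [c [Hc1 Hc2]].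
  - intros c Hc. apply is_derive_Reals. auto.
  - assert (0 <= f' c) by (apply Hp; lra). nra.
Qed.

(* ln (1 + z) <= z, from 1 + z <= e^z. *)
Lemma ln_le_sub1 z : -1 < z -> ln (1 + z) <= z.
Proof.
  intros Hz. rewrite <- (ln_exp z) at 2. apply ln_le; [lra|]. apply exp_ineq1_le.
Qed.

Lemma ln_ratio_lower u : 0 <= u < 1 -> 2 * u <= ln (1 + u) - ln (1 - u).
Proof.
  intros Hu.
  set (f := fun v => ln (1 + v) - ln (1 - v) - 2 * v).
  assert (f 0 <= f u).
  { apply (le_of_derive_nonneg f (fun v => / (1 + v) + / (1 - v) - 2)); [lra| |].
    - intros c Hc. unfold f. auto_derive; [repeat split; lra|]. field; lra.
    - intros c Hc.
      replace (/ (1 + c) + / (1 - c) - 2) with (2 * c * c / ((1 + c) * (1 - c)))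
        by (field; lra).
      apply Rmult_le_pos; [nra|]. left; apply Rinv_0_lt_compat; nra. }
  unfold f in H. rewrite Rplus_0_r, Rminus_0_r, ln_1 in H. lra.
Qed.

Lemma ln_ratio_upper u : 0 <= u < 1 -> ln (1 + u) - ln (1 - u) <= 2 * u / (1 - u * u).
Proof.
  intros Hu.
  set (f := fun v => 2 * v / (1 - v * v) - (ln (1 + v) - ln (1 - v))).
  assert (f 0 <= f u).
  { apply (le_of_derive_nonneg f (fun v => 4 * (v * v) / ((1 - v * v) * (1 - v * v))));
      [lra| |].
    - intros c Hc. assert (0 < 1 - c * c) by nra. unfold f.
      auto_derive; [repeat split; lra|]. field; lra.
    - intros c Hc. assert (0 < 1 - c * c) by nra. apply Rmult_le_pos; [nra|].
      left; apply Rinv_0_lt_compat; nra. }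
  unfold f in H. rewrite Rplus_0_r, Rminus_0_r, ln_1 in H.
  replace (2 * 0 / (1 - 0 * 0)) with 0 in H by field. lra.
Qed.

(* Substituting u = 1/(2z+1):  1/(z+1/2) <= ln(1 + 1/z) <= (z+1/2)/(z(z+1)). *)
Lemma ln_succ_bounds z : 0 < z ->
  / (z + / 2) <= ln (z + 1) - ln z <= (z + / 2) / (z * (z + 1)).
Proof.
  intros Hz. set (u := / (2 * z + 1)).
  assert (Hu : 0 <= u < 1).
  { unfold u; split; [left; apply Rinv_0_lt_compat; lra|].
    rewrite <- Rinv_1. apply Rinv_lt_contravar; lra. }
  assert (E : ln (z + 1) - ln z = ln (1 + u) - ln (1 - u)).
  { rewrite <- !ln_div; try lra. f_equal. unfold u. field; lra. }
  rewrite E. split.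
  - replace (/ (z + / 2)) with (2 * u) by (unfold u; field; lra).
    apply ln_ratio_lower; auto.
  - replace ((z + / 2) / (z * (z + 1))) with (2 * u / (1 - u * u)).
    + apply ln_ratio_upper; auto.
    + unfold u. field. repeat split; try lra. nra.
Qed.

(** * The Stirling step defect *)

(* dd z measures how far one factor z of a factorial is from its Stirling
   approximation:  dd z = (z + 1/2) ln (1 + 1/z) - 1. *)
Definition dd (z : R) : R := (z + / 2) * (ln (z + 1) - ln z) - 1.

Lemma dd_nonneg z : 0 < z -> 0 <= dd z.
Proof.
  intros Hz. destruct (ln_succ_bounds z Hz) as [H _]. unfold dd.
  apply Rmult_le_compat_l with (r := z + / 2) in H; [|lra].
  rewrite Rinv_r in H; lra.
Qed.

Lemma dd_upper z : 0 < z -> dd z <= / 4 * (/ z - / (z + 1)).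
Proof.
  intros Hz. destruct (ln_succ_bounds z Hz) as [_ H]. unfold dd.
  apply Rmult_le_compat_l with (r := z + / 2) in H; [|lra].
  replace (/ 4 * (/ z - / (z + 1)))
    with ((z + / 2) * ((z + / 2) / (z * (z + 1))) - 1) by (field; lra). lra.
Qed.

(* dd is nonincreasing: its derivative is nonpositive by ln_succ_bounds. *)
Lemma dd_decr z y : 0 < z -> z <= y -> dd y <= dd z.
Proof.
  intros Hz Hzy. set (f := fun v => - dd v).
  assert (f z <= f y); [|unfold f in *; lra].
  apply (le_of_derive_nonneg f
           (fun v => - (ln (v + 1) - ln v - (v + / 2) / (v * (v + 1))))); [lra| |].
  - intros c Hc. unfold f, dd. auto_derive; [repeat split; lra|]. field; lra.
  - intros c Hc. destruct (ln_succ_bounds c) as [_ H]; lra.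
Qed.

(** * The Stirling remainder of k! *)

Definition lfact (k : nat) : R := rsum k (fun i => ln (INR (S i))).

Lemma ln_fact k : ln (INR (fact k)) = lfact k.
Proof.
  induction k; unfold lfact in *; [simpl; apply ln_1|].
  change (fact (S k)) with (S k * fact k)%nat.
  rewrite rsum_S, mult_INR, ln_mult; [rewrite IHk; ring| |].
  - apply lt_0_INR; lia.
  - apply lt_0_INR. pose proof (lt_O_fact k). lia.
Qed.

(* la k = ln k! - (k + 1/2) ln k + k; Stirling's formula says la k -> ln sqrt(2 pi). *)
Definition la (k : nat) : R := lfact k + INR k - INR k * ln (INR k) - / 2 * ln (INR k).

Lemma la_1 : la 1 = 1.
Proof. unfold la, lfact. simpl. rewrite ln_1. lra. Qed.

Lemma la_step k : (1 <= k)%nat -> la (S k) = la k - dd (INR k).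
Proof. intros Hk. unfold la, dd, lfact. rewrite rsum_S, S_INR. ring. Qed.

Lemma la_le1 k : (1 <= k)%nat -> la k <= 1.
Proof.
  induction k; intros Hk; [lia|].
  destruct (Nat.eq_dec k 0) as [->|Hk0]; [rewrite la_1; lra|].
  rewrite la_step by lia. pose proof (dd_nonneg (INR k) (INR_pos1 k ltac:(lia))).
  specialize (IHk ltac:(lia)). lra.
Qed.

Lemma la_lower k : (1 <= k)%nat -> 1 - / 4 * (1 - / INR k) <= la k.
Proof.
  induction k; intros Hk; [lia|].
  destruct (Nat.eq_dec k 0) as [->|Hk0]; [rewrite la_1; simpl; rewrite Rinv_1; lra|].
  rewrite la_step by lia. pose proof (dd_upper (INR k) (INR_pos1 k ltac:(lia))).
  specialize (IHk ltac:(lia)). rewrite S_INR. lra.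
Qed.

Lemma la_ge k : (1 <= k)%nat -> 3 / 4 <= la k.
Proof.
  intros Hk. pose proof (la_lower k Hk).
  assert (0 < / INR k) by (apply Rinv_0_lt_compat, INR_pos1; auto). lra.
Qed.

Lemma sum_dd_from1 n : rsum n (fun t => dd (1 + INR t)) = 1 - la (S n).
Proof.
  induction n; [simpl; rewrite la_1; ring|].
  rewrite rsum_S, IHn, (la_step (S n)), S_INR by lia.
  rewrite (Rplus_comm 1 (INR n)). ring.
Qed.

(** * Wallis' inequality *)

(* cw k = prod_{i<k} (2i+1)/(2i+2) = (2k)! / (2^k k!)^2. *)
Definition cw (k : nat) : R := rprod k (fun i => (2 * INR i + 1) / (2 * INR i + 2)).

Lemma cw_S k : cw (S k) = cw k * ((2 * INR k + 1) / (2 * INR k + 2)).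
Proof. reflexivity. Qed.

Lemma cw_pos k : 0 < cw k.
Proof.
  apply rprod_pos. intros i _. pose proof (pos_INR i). apply Rdiv_lt_0_compat; lra.
Qed.

Lemma ln_cw k : ln (cw k) = lfact (2 * k) - 2 * lfact k - 2 * INR k * ln 2.
Proof.
  induction k; [unfold cw, lfact; simpl; rewrite ln_1; ring|].
  replace (2 * S k)%nat with (S (S (2 * k))) by lia.
  pose proof (pos_INR k).
  rewrite cw_S, ln_mult, ln_div, IHk; try lra; [|apply cw_pos|apply Rdiv_lt_0_compat; lra].
  unfold lfact. rewrite !rsum_S, !S_INR, mult_INR. replace (INR 2) with 2 by (simpl; ring).
  replace (2 * INR k + 2) with (2 * (INR k + 1)) by ring.
  replace (2 * INR k + 1 + 1) with (2 * (INR k + 1)) by ring.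
  rewrite ln_mult; lra.
Qed.

Definition Iw (n : nat) : R := RInt (fun t => sin t ^ n) 0 (PI / 2).

Lemma cont_sinpow n x : continuous (fun t => sin t ^ n) x.
Proof.
  apply (ex_derive_continuous (K:=R_AbsRing) (V:=R_NormedModule)). auto_derive. auto.
Qed.

Lemma ex_sinpow n : ex_RInt (fun t => sin t ^ n) 0 (PI / 2).
Proof. apply (ex_RInt_continuous (V:=R_CompleteNormedModule)). intros; apply cont_sinpow. Qed.

Lemma Iw_0 : Iw 0 = PI / 2.
Proof. unfold Iw. simpl. rewrite RInt_const. unfold scal; simpl. unfold mult; simpl. ring. Qed.

Lemma Iw_1 : Iw 1 = 1.
Proof.
  unfold Iw. apply is_RInt_unique.
  replace 1 with (minus ((fun t => - cos t) (PI/2)) ((fun t => - cos t) 0)).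
  - apply (is_RInt_derive (V:=R_CompleteNormedModule) (fun t => - cos t)).
    + intros x _. auto_derive; auto. ring.
    + intros; apply cont_sinpow.
  - simpl. rewrite cos_PI2, cos_0. unfold minus, plus, opp; simpl. ring.
Qed.

(* Integration by parts:  (n+2) I_{n+2} = (n+1) I_n. *)
Lemma Iw_rec n : (INR n + 2) * Iw (n + 2) = (INR n + 1) * Iw n.
Proof.
  set (df := fun t => (INR n + 2) * sin t ^ (n + 2) - (INR n + 1) * sin t ^ n).
  set (F := fun t => - cos t * sin t ^ (S n)).
  assert (Hparts : is_RInt df 0 (PI / 2) (minus (F (PI/2)) (F 0))).
  { apply (is_RInt_derive (V:=R_CompleteNormedModule)).
    - intros x _. unfold df, F. auto_derive; auto.
      change (match n with 0%nat => 1 | S _ => INR n + 1 end) with (INR (S n)).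
      rewrite S_INR.
      replace (sin x ^ (n + 2)) with (sin x * (sin x * sin x ^ n))
        by (replace (n + 2)%nat with (S (S n)) by lia; simpl; ring).
      pose proof (sin2_cos2 x) as Hsc. unfold Rsqr in Hsc.
      apply Rminus_diag_uniq.
      transitivity ((INR n + 1) * sin x ^ n * (1 - (sin x * sin x + cos x * cos x)));
        [ring|rewrite Hsc; ring].
    - intros x _. unfold df.
      apply (ex_derive_continuous (K:=R_AbsRing) (V:=R_NormedModule)). auto_derive. auto. }
  assert (Hbound : minus (F (PI/2)) (F 0) = 0).
  { unfold F. rewrite cos_PI2, sin_0. unfold minus, plus, opp; simpl. ring. }
  rewrite Hbound in Hparts.
  assert (Hlin : is_RInt df 0 (PI / 2) ((INR n + 2) * Iw (n + 2) - (INR n + 1) * Iw n)).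
  { apply (is_RInt_minus (V:=R_CompleteNormedModule)
      (fun t => (INR n + 2) * sin t ^ (n + 2)) (fun t => (INR n + 1) * sin t ^ n));
    apply (is_RInt_scal (V:=R_CompleteNormedModule) (fun t => sin t ^ _));
    apply (RInt_correct (V:=R_CompleteNormedModule)); apply ex_sinpow. }
  apply (is_RInt_unique (V:=R_CompleteNormedModule)) in Hparts.
  apply (is_RInt_unique (V:=R_CompleteNormedModule)) in Hlin. lra.
Qed.

(* On [0, pi/2] we have 0 <= sin <= 1, so I_n is nonincreasing in n. *)
Lemma Iw_decr n : Iw (S n) <= Iw n.
Proof.
  pose proof PI_RGT_0. unfold Iw. apply RInt_le; [lra|apply ex_sinpow|apply ex_sinpow|].
  intros x Hx. assert (0 <= sin x) by (apply sin_ge_0; lra). pose proof (SIN_bound x).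
  simpl. pose proof (pow_le (sin x) n H0). nra.
Qed.

Lemma Iw_even k : Iw (2 * k) = PI / 2 * cw k.
Proof.
  induction k; [simpl; rewrite Iw_0; unfold cw; simpl; ring|].
  pose proof (Iw_rec (2 * k)) as H. pose proof (pos_INR k).
  replace (2 * k + 2)%nat with (2 * S k)%nat in H by lia.
  rewrite IHk, mult_INR in H. replace (INR 2) with 2 in H by (simpl; ring).
  rewrite cw_S. apply (Rmult_eq_reg_l (2 * INR k + 2)); [|lra].
  rewrite H. field. lra.
Qed.

Lemma Iw_odd k : Iw (2 * k + 1) * ((2 * INR k + 1) * cw k) = 1.
Proof.
  induction k; [simpl; rewrite Iw_1; unfold cw; simpl; ring|].
  pose proof (Iw_rec (2 * k + 1)) as H. pose proof (pos_INR k).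
  replace (2 * k + 1 + 2)%nat with (2 * S k + 1)%nat in H by lia.
  rewrite plus_INR, mult_INR in H. replace (INR 2) with 2 in H by (simpl; ring).
  replace (INR 1) with 1 in H by reflexivity.
  rewrite cw_S, S_INR.
  replace (Iw (2 * S k + 1) * ((2 * (INR k + 1) + 1) * (cw k * ((2 * INR k + 1) / (2 * INR k + 2)))))
    with ((2 * INR k + 1 + 2) * Iw (2 * S k + 1) * (cw k * ((2 * INR k + 1) / (2 * INR k + 2))))
    by ring.
  rewrite H. etransitivity; [|exact IHk]. field. lra.
Qed.

(* Wallis' inequality, from I_{2k} <= I_{2k-1}:  pi <= 1 / (k cw_k^2). *)
Lemma wallis k : (1 <= k)%nat -> PI <= / (INR k * (cw k * cw k)).
Proof.
  intros Hk. destruct k as [|j]; [lia|].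
  pose proof (Iw_decr (2 * j + 1)) as H.
  replace (S (2 * j + 1)) with (2 * S j)%nat in H by lia.
  pose proof (Iw_odd j) as Ho. pose proof (cw_pos j). pose proof (pos_INR j).
  rewrite Iw_even, cw_S in H. rewrite cw_S, S_INR.
  assert (Hi : Iw (2 * j + 1) = / ((2 * INR j + 1) * cw j)).
  { apply (Rmult_eq_reg_r ((2 * INR j + 1) * cw j)); [rewrite Ho; field; lra|].
    apply Rgt_not_eq, Rmult_lt_0_compat; lra. }
  rewrite Hi in H. set (c := cw j) in *. set (a := INR j) in *.
  apply Rmult_le_compat_r with (r := 4 * (a + 1) / ((2 * a + 1) * c)) in H.
  2:{ apply Rlt_le, Rdiv_lt_0_compat; [lra|apply Rmult_lt_0_compat; lra]. }
  replace (PI / 2 * (c * ((2 * a + 1) / (2 * a + 2))) * (4 * (a + 1) / ((2 * a + 1) * c)))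
    with PI in H by (field; repeat split; lra).
  replace (/ ((a + 1) * (c * ((2 * a + 1) / (2 * a + 2)) * (c * ((2 * a + 1) / (2 * a + 2))))))
    with (/ ((2 * a + 1) * c) * (4 * (a + 1) / ((2 * a + 1) * c)))
    by (field; repeat split; lra).
  exact H.
Qed.

(** * Stirling's lower bound  ln k! >= ln sqrt(2 pi) + (k + 1/2) ln k - k *)

Definition stirling_const : R := ln (sqrt (2 * PI)).

Lemma stirling_const_half_ln : stirling_const = / 2 * ln (2 * PI).
Proof.
  pose proof PI_RGT_0. unfold stirling_const.
  assert (0 < sqrt (2 * PI)) by (apply sqrt_lt_R0; lra).
  rewrite <- (sqrt_sqrt (2 * PI)) at 2 by lra. rewrite ln_mult by lra. lra.
Qed.

(* Doubling: by Wallis, la k - la (2k) >= ln sqrt(2 pi) - la k. *)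
Lemma la_double k : (1 <= k)%nat -> stirling_const <= 2 * la k - la (2 * k).
Proof.
  intros Hk. pose proof (INR_pos1 k Hk) as Hkp. pose proof (cw_pos k) as Hc.
  assert (E : 2 * la k - la (2 * k) = - ln (cw k) - / 2 * ln (INR k) + / 2 * ln 2).
  { rewrite ln_cw. unfold la. rewrite mult_INR. replace (INR 2) with 2 by (simpl; ring).
    rewrite ln_mult; lra. }
  assert (HW : ln PI <= - ln (INR k) - 2 * ln (cw k)).
  { pose proof (ln_le _ _ PI_RGT_0 (wallis k Hk)) as H.
    rewrite ln_Rinv, !ln_mult in H by (try apply Rmult_lt_0_compat; nra). lra. }
  rewrite E, stirling_const_half_ln, ln_mult; [lra|lra|apply PI_RGT_0].
Qed.

Lemma pow2_ge j : INR j + 1 <= 2 ^ j.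
Proof.
  induction j; [simpl; lra|]. rewrite S_INR. change (2 ^ S j) with (2 * 2 ^ j).
  pose proof (pos_INR j). lra.
Qed.

(* If la K were below the constant, doubling would drive la (2^j K) to -oo,
   contradicting la >= 3/4. *)
Lemma stirling k : (1 <= k)%nat -> stirling_const <= la k.
Proof.
  intros HK. destruct (Rle_or_lt stirling_const (la k)) as [H|H]; auto. exfalso.
  set (e := la k - stirling_const).
  assert (Hj : forall j, (1 <= 2 ^ j * k)%nat /\ la (2 ^ j * k) - stirling_const <= 2 ^ j * e).
  { induction j; [simpl; rewrite Nat.add_0_r; split; auto; unfold e; lra|].
    destruct IHj as [Ha Hb].
    replace (2 ^ S j * k)%nat with (2 * (2 ^ j * k))%nat by (simpl; lia).
    split; [lia|]. pose proof (la_double _ Ha). simpl pow. lra. }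
  assert (He : 0 < - e) by (unfold e; lra).
  destruct (INR_archimed (- e) (/ 4 + stirling_const) He) as [j Hj2].
  destruct (Hj j) as [Ha Hb]. pose proof (la_ge _ Ha). pose proof (pow2_ge j).
  assert (2 ^ j * (- e) >= INR j * (- e)) by nra. nra.
Qed.

Lemma exp_nat_mult (N : nat) y : exp (INR N * y) = exp y ^ N.
Proof.
  induction N; simpl; [rewrite Rmult_0_l, exp_0; auto|].
  rewrite <- IHN, <- exp_plus. f_equal. destruct N; simpl; ring.
Qed.

(* Wallis' inequality with k = 3 gives pi <= 256/75. *)
Lemma PI_ub : PI <= 256 / 75.
Proof.
  pose proof (wallis 3 ltac:(lia)) as H. unfold cw in H. simpl in H.
  replace (256 / 75) with (/ ((1 + 1 + 1) *
     (1 * ((2 * 0 + 1) / (2 * 0 + 2)) * ((2 * 1 + 1) / (2 * 1 + 2)) *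
      ((2 * (1 + 1) + 1) / (2 * (1 + 1) + 2)) *
      (1 * ((2 * 0 + 1) / (2 * 0 + 2)) * ((2 * 1 + 1) / (2 * 1 + 2)) *
       ((2 * (1 + 1) + 1) / (2 * (1 + 1) + 2)))))) by field.
  exact H.
Qed.

(* ln sqrt(2 pi) <= 1, i.e. 2 pi <= e^2, checked via e^2 >= (1 + 1/16)^32. *)
Lemma stirling_const_le1 : stirling_const <= 1.
Proof.
  rewrite stirling_const_half_ln.
  assert (H : 2 * PI <= exp 2).
  { replace 2 with (INR 32 * (1/16)) at 2 by (simpl; field).
    rewrite exp_nat_mult.
    assert (H1 : (1 + 1/16) ^ 32 <= exp (1/16) ^ 32).
    { apply pow_incr. split; [lra|]. apply exp_ineq1_le. }
    pose proof PI_ub. assert (2 * (256/75) <= (1 + 1/16) ^ 32) by (simpl; lra). lra. }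
  apply ln_le in H; [|pose proof PI_RGT_0; lra]. rewrite ln_exp in H. lra.
Qed.

(** * Euler's Gamma function as Gauss' limit *)

Definition Lg (x : R) (k : nat) : R :=
  lfact k + x * ln (INR k) - rsum (S k) (fun i => ln (x + INR i)).

Lemma gauss_exp x k : 0 < x -> gauss_seq x k = exp (Lg x k).
Proof.
  intros Hx. unfold gauss_seq, Lg, Rpower.
  assert (Hf : forall i, (i < S k)%nat -> 0 < x + INR i) by (intros; pose proof (pos_INR i); lra).
  rewrite <- (exp_ln (INR (fact k))) by (apply lt_0_INR, lt_O_fact).
  rewrite <- (exp_ln (rprod (S k) _)) by (apply rprod_pos; auto).
  rewrite ln_fact, ln_rprod by auto.
  unfold Rminus. rewrite !exp_plus, exp_Ropp. field. apply Rgt_not_eq, exp_pos.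
Qed.

Lemma Lg_step x k : 0 < x -> (1 <= k)%nat ->
  0 <= Lg x (S k) - Lg x k <= x * (x + 1) * (/ INR k - / (INR k + 1)).
Proof.
  intros Hx Hk. pose proof (INR_pos1 k Hk) as Hkp.
  assert (E : Lg x (S k) - Lg x k =
     x * (ln (INR k + 1) - ln (INR k)) - (ln (x + INR k + 1) - ln (INR k + 1))).
  { unfold Lg, lfact. rewrite !rsum_S, !S_INR.
    replace (x + (INR k + 1)) with (x + INR k + 1) by ring. ring. }
  rewrite E. destruct (ln_succ_bounds (INR k) Hkp) as [A1 A2].
  assert (B1 : ln (x + INR k + 1) - ln (INR k + 1) <= x / (INR k + 1)).
  { rewrite <- ln_div by lra.
    replace ((x + INR k + 1) / (INR k + 1)) with (1 + x / (INR k + 1)) by (field; lra).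
    apply ln_le_sub1. assert (0 < x / (INR k + 1)) by (apply Rdiv_lt_0_compat; lra). lra. }
  assert (B2 : x / (x + INR k + 1) <= ln (x + INR k + 1) - ln (INR k + 1)).
  { assert (Hlt : x / (x + INR k + 1) < 1)
      by (apply Rmult_lt_reg_r with (x + INR k + 1); [lra|];
          unfold Rdiv; rewrite Rmult_assoc, Rinv_l; lra).
    pose proof (ln_le_sub1 (- (x / (x + INR k + 1))) ltac:(lra)) as H.
    replace (1 + - (x / (x + INR k + 1))) with ((INR k + 1) / (x + INR k + 1)) in H
      by (field; lra).
    rewrite ln_div in H by lra. lra. }
  assert (C1 : / (INR k + 1) <= ln (INR k + 1) - ln (INR k)).
  { eapply Rle_trans; [|exact A1]. apply Rinv_le_contravar; lra. }
  assert (C2 : ln (INR k + 1) - ln (INR k) <= / INR k).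
  { eapply Rle_trans; [exact A2|].
    apply Rmult_le_reg_r with (INR k * (INR k + 1)); [nra|].
    unfold Rdiv. rewrite Rmult_assoc, Rinv_l by nra. field_simplify; nra. }
  split.
  - apply Rmult_le_compat_l with (r := x) in C1; [|lra]. unfold Rdiv in B1. lra.
  - apply Rmult_le_compat_l with (r := x) in C2; [|lra].
    assert (x * / INR k - x / (x + INR k + 1) <= x * (x + 1) * (/ INR k - / (INR k + 1))).
    { replace (x * / INR k - x / (x + INR k + 1))
        with (x * (x + 1) / (INR k * (x + INR k + 1))) by (field; lra).
      replace (x * (x + 1) * (/ INR k - / (INR k + 1)))
        with (x * (x + 1) / (INR k * (INR k + 1))) by (field; lra).
      apply Rmult_le_compat_l; [nra|]. apply Rinv_le_contravar; nra. }
    lra.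
Qed.

Lemma cv_ext (u v : nat -> R) l :
  (forall k, (1 <= k)%nat -> u k = v k) -> Un_cv v l -> Un_cv u l.
Proof.
  intros He Hv eps Heps. destruct (Hv eps Heps) as [N HN]. exists (S N).
  intros k Hk. rewrite He by lia. apply HN. lia.
Qed.

Lemma cv_shift (u : nat -> R) l : Un_cv (fun k => u (S k)) l -> Un_cv u l.
Proof.
  intros Hv eps Heps. destruct (Hv eps Heps) as [N HN]. exists (S N).
  intros k Hk. destruct k; [lia|]. apply HN. lia.
Qed.

Lemma cv_sub_inv c c' d : 0 < d -> Un_cv (fun k => c - c' / (INR k + d)) c.
Proof.
  intros Hd eps Heps. destruct (INR_archimed eps (Rabs c') Heps) as [N HN].
  exists N. intros k Hk. unfold Rdist.
  assert (HkN : INR N <= INR k) by (apply le_INR; lia). pose proof (pos_INR k).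
  replace (c - c' / (INR k + d) - c) with (- (c' / (INR k + d))) by ring.
  unfold Rdiv. rewrite Rabs_Ropp, Rabs_mult, Rabs_inv, (Rabs_pos_eq (INR k + d)) by lra.
  apply Rmult_lt_reg_r with (INR k + d); [lra|].
  rewrite Rmult_assoc, Rinv_l by lra. nra.
Qed.

(* Monotone and bounded, the Gauss products converge to a positive limit. *)
Lemma gauss_cv x : 0 < x -> exists l, 0 < l /\ Un_cv (gauss_seq x) l.
Proof.
  intros Hx. set (u := fun k => Lg x (S k)).
  assert (Hg : Un_growing u).
  { intros k. unfold u. destruct (Lg_step x (S k) Hx ltac:(lia)). lra. }
  assert (Hb : forall k, u k + x * (x + 1) * / (INR k + 1) <= u 0%nat + x * (x + 1)).
  { induction k; [simpl; rewrite Rplus_0_l, Rinv_1; lra|].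
    unfold u in *. destruct (Lg_step x (S k) Hx ltac:(lia)) as [_ H].
    rewrite !S_INR in *. lra. }
  assert (Hub : has_ub u).
  { exists (u 0%nat + x * (x + 1)). intros y [k ->]. specialize (Hb k).
    assert (0 <= x * (x + 1) * / (INR k + 1)).
    { apply Rmult_le_pos; [nra|]. left; apply Rinv_0_lt_compat. pose proof (pos_INR k); lra. }
    lra. }
  destruct (growing_cv u Hg Hub) as [l Hl].
  exists (exp l). split; [apply exp_pos|]. apply cv_shift.
  assert (He : Un_cv (fun k => exp (u k)) (exp l)).
  { apply continuity_seq; auto. apply derivable_continuous_pt, derivable_pt_exp. }
  eapply cv_ext; [|exact He]. intros k _. unfold u. apply gauss_exp; auto.
Qed.

Lemma Gamma_spec x : 0 < x -> Un_cv (gauss_seq x) (Gamma x) /\ 0 < Gamma x.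
Proof.
  intros Hx. destruct (gauss_cv x Hx) as [l [Hl Hc]].
  assert (HG : Un_cv (gauss_seq x) (Gamma x)) by (unfold Gamma; apply epsilon_spec; eauto).
  split; auto. rewrite (UL_sequence _ _ _ HG Hc). auto.
Qed.

Lemma rsum_ln_shift1 x k : 0 < x ->
  rsum (S k) (fun i => ln (x + 1 + INR i)) =
  rsum (S k) (fun i => ln (x + INR i)) + ln (x + INR k + 1) - ln x.
Proof.
  intros Hx. induction k; [simpl; rewrite !Rplus_0_r; ring|].
  rewrite rsum_S, IHk, (rsum_S (S k) (fun i => ln (x + INR i))), S_INR.
  replace (x + 1 + (INR k + 1)) with (x + (INR k + 1) + 1) by ring.
  replace (x + (INR k + 1)) with (x + INR k + 1) by ring. ring.
Qed.

(* The functional equation, since gauss_seq (x+1) k = gauss_seq x k * x k / (x + k + 1). *)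
Lemma Gamma_succ x : 0 < x -> Gamma (x + 1) = x * Gamma x.
Proof.
  intros Hx. destruct (Gamma_spec x Hx) as [H1 _].
  destruct (Gamma_spec (x + 1) ltac:(lra)) as [H2 _].
  pose proof (CV_mult _ _ _ _ H1 (cv_sub_inv x (x * (x + 1)) (x + 1) ltac:(lra))) as H3.
  assert (H4 : Un_cv (gauss_seq (x + 1)) (Gamma x * x)).
  { eapply cv_ext; [|exact H3]. intros k Hk. cbv beta.
    pose proof (INR_pos1 k Hk).
    rewrite !gauss_exp by lra. unfold Lg. rewrite rsum_ln_shift1 by lra.
    replace (x - x * (x + 1) / (INR k + (x + 1)))
      with (exp (ln (INR k) + ln x - ln (x + INR k + 1))).
    - rewrite <- exp_plus. f_equal. ring.
    - unfold Rminus. rewrite !exp_plus, exp_Ropp, !exp_ln by lra. field. lra. }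
  rewrite (UL_sequence _ _ _ H2 H4). ring.
Qed.

Lemma rprod_fact k : rprod (S k) (fun i => 1 + INR i) = INR (fact (S k)).
Proof.
  induction k; [simpl; ring|].
  rewrite rprod_S, IHk. change (fact (S (S k))) with (S (S k) * fact (S k))%nat.
  rewrite mult_INR, (S_INR (S k)). ring.
Qed.

(* gauss_seq 1 k = k / (k + 1). *)
Lemma Gamma_1 : Gamma 1 = 1.
Proof.
  destruct (Gamma_spec 1 ltac:(lra)) as [H1 _].
  assert (H2 : Un_cv (gauss_seq 1) 1).
  { eapply cv_ext; [|apply (cv_sub_inv 1 1 1); lra].
    intros k Hk. pose proof (INR_pos1 k Hk). unfold gauss_seq.
    rewrite rprod_fact, Rpower_1 by lra. change (fact (S k)) with (S k * fact k)%nat.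
    rewrite mult_INR, S_INR. pose proof (INR_fact_lt_0 k). field. lra. }
  rewrite (UL_sequence _ _ _ H1 H2). lra.
Qed.

Lemma ln_Gamma_nat k : ln (Gamma (INR (S k))) = lfact k.
Proof.
  induction k; [simpl; rewrite Gamma_1; unfold lfact; simpl; apply ln_1|].
  destruct (Gamma_spec (INR (S k))) as [_ Hp]; [apply lt_0_INR; lia|].
  rewrite (S_INR (S k)), Gamma_succ, ln_mult, IHk; try (apply lt_0_INR; lia); auto.
  unfold lfact. rewrite rsum_S. ring.
Qed.

Lemma ln_Gamma_shift b t : 0 < b ->
  ln (Gamma (b + INR t)) = ln (Gamma b) + rsum t (fun i => ln (b + INR i)).
Proof.
  intros Hb. induction t; [simpl; rewrite Rplus_0_r; ring|].
  pose proof (pos_INR t). destruct (Gamma_spec (b + INR t)) as [_ Hp]; [lra|].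
  rewrite S_INR. replace (b + (INR t + 1)) with (b + INR t + 1) by ring.
  rewrite Gamma_succ, ln_mult, IHt, rsum_S by lra. ring.
Qed.

(** * The logarithm of S^beta *)

Section Estimator.
Variables (D n : nat) (x : nat -> nat) (w : nat -> nat -> R) (beta : R).
Hypothesis Hbeta : 0 < beta.
Hypothesis Hx : forall t, (t < n)%nat -> (x t < D)%nat.
Hypothesis Hw : weights_ok D n x w.

(* ln of the numerator of S^beta at a step where x_{t+1} has count c,
   the new-symbol weight set aside:  ln c if c > 0, ln beta if c = 0. *)
Definition psi (c : nat) : R := if Nat.eqb c 0 then ln beta else ln (INR c).

Lemma rsum_psi N : rsum N psi = if Nat.ltb 0 N then ln beta + lfact (N - 1) else 0.
Proof.
  destruct N; [reflexivity|]. rewrite rsum_shift0. simpl. unfold lfact, psi.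
  rewrite Nat.sub_0_r. f_equal.
Qed.

(* ln of the product of the denominators: ln (beta (beta+1) ... (beta+n-1)). *)
Definition LP : R := rsum n (fun t => ln (INR t + beta)).

Lemma weight_pos t : (t < n)%nat -> cnt x t (x t) = 0%nat -> 0 < w t (x t).
Proof. intros Ht H0. destruct (Hw t ltac:(lia)) as [Hw1 _]. auto. Qed.

Lemma Scond_pos t : (t < n)%nat -> 0 < Scond beta w x t.
Proof.
  intros Ht. pose proof (pos_INR t). unfold Scond.
  destruct (Nat.ltb_spec 0 (cnt x t (x t))).
  - apply Rdiv_lt_0_compat; [apply lt_0_INR; auto|lra].
  - apply Rdiv_lt_0_compat; [|lra].
    apply Rmult_lt_0_compat; [lra|apply weight_pos; auto; lia].
Qed.

Lemma Sbeta_pos : 0 < Sbeta beta w x n.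
Proof. apply rprod_pos, Scond_pos. Qed.

Lemma ln_Scond t : (t < n)%nat ->
  ln (Scond beta w x t) = psi (cnt x t (x t))
    - (if Nat.eqb (cnt x t (x t)) 0 then ln (/ w t (x t)) else 0) - ln (INR t + beta).
Proof.
  intros Ht. pose proof (pos_INR t). unfold Scond, psi.
  destruct (Nat.ltb_spec 0 (cnt x t (x t))), (Nat.eqb_spec (cnt x t (x t)) 0); try lia.
  - rewrite ln_div by (try (apply lt_0_INR; lia); lra). ring.
  - pose proof (weight_pos t Ht ltac:(auto)).
    rewrite ln_div, ln_mult, ln_Rinv by (try apply Rmult_lt_0_compat; lra). ring.
Qed.

Lemma ln_Sbeta : ln (Sbeta beta w x n) =
  ln beta * INR (msize D n x) + sumA D n x (fun j => lfact (cnt x n j - 1)) - CLw w x n - LP.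
Proof.
  unfold Sbeta. rewrite ln_rprod by apply Scond_pos.
  rewrite (rsum_ext n _ (fun t => psi (cnt x t (x t)) -
     (if Nat.eqb (cnt x t (x t)) 0 then ln (/ w t (x t)) else 0) - ln (INR t + beta)))
    by apply ln_Scond.
  rewrite !rsum_minus. unfold CLw, LP. rewrite (sum_steps_by_symbol D n x psi Hx).
  rewrite (rsum_ext D _ (fun j => ln beta * (if Nat.ltb 0 (cnt x n j) then 1 else 0) +
      (if Nat.ltb 0 (cnt x n j) then lfact (cnt x n j - 1) else 0))).
  2:{ intros j _. rewrite rsum_psi. destruct (Nat.ltb 0 (cnt x n j)); ring. }
  rewrite rsum_plus, rsum_scal, <- msize_rsum. unfold sumA. ring.
Qed.

Hypothesis Hn : (1 <= n)%nat.

Lemma RS_eq : RS D beta w x n =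
  - (INR n * ln (INR n)) + sumA D n x (fun j => INR (cnt x n j) * ln (INR (cnt x n j)))
  - ln (Sbeta beta w x n).
Proof.
  pose proof Sbeta_pos as HS. pose proof (INR_pos1 n Hn) as Hnp.
  assert (Hpn : 0 < INR n ^ n) by (apply pow_lt; auto).
  assert (HP : forall j, (j < D)%nat ->
            0 < (if Nat.ltb 0 (cnt x n j) then INR (cnt x n j) ^ cnt x n j else 1)).
  { intros j _. destruct (Nat.ltb_spec 0 (cnt x n j)); [apply pow_lt, lt_0_INR; auto|lra]. }
  assert (HPA : 0 < prodA D n x (fun j => INR (cnt x n j) ^ cnt x n j))
    by (apply rprod_pos; auto).
  unfold RS, redundancy.
  rewrite ln_div, ln_mult, ln_Rinv, ln_pow; auto;
    [|apply Rinv_0_lt_compat; auto|apply Rmult_lt_0_compat; auto; apply Rinv_0_lt_compat; auto].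
  unfold prodA. rewrite ln_rprod by auto. unfold sumA.
  rewrite (rsum_ext D (fun i => ln _) (fun j => if Nat.ltb 0 (cnt x n j)
             then INR (cnt x n j) * ln (INR (cnt x n j)) else 0)); [ring|].
  intros j _. destruct (Nat.ltb_spec 0 (cnt x n j)); [apply ln_pow, lt_0_INR; auto|apply ln_1].
Qed.

End Estimator.

(** * The exact redundancy and its Stirling remainder form *)

Lemma ln_pow_div_Gamma k : (1 <= k)%nat ->
  ln (INR k ^ k / Gamma (INR k)) = INR k * ln (INR k) - lfact (k - 1).
Proof.
  intros Hk. destruct k as [|j]; [lia|].
  destruct (Gamma_spec (INR (S j))) as [_ HG]; [apply lt_0_INR; lia|].
  rewrite ln_div, ln_pow, ln_Gamma_nat, Nat.sub_succ, Nat.sub_0_r;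
    try apply pow_lt; try apply lt_0_INR; auto; lia.
Qed.

Lemma lfact_pred_la k : (1 <= k)%nat ->
  INR k * ln (INR k) - lfact (k - 1) = INR k - la k + / 2 * ln (INR k).
Proof.
  intros Hk. destruct k as [|j]; [lia|]. rewrite Nat.sub_succ, Nat.sub_0_r.
  unfold la, lfact. rewrite rsum_S. field.
Qed.

Lemma ln_Gamma_ratio n beta : 0 < beta -> (1 <= n)%nat ->
  ln (Gamma (INR n + beta) / (INR n ^ n * Gamma beta)) = LP n beta - INR n * ln (INR n).
Proof.
  intros Hb Hn. pose proof (INR_pos1 n Hn).
  destruct (Gamma_spec beta Hb) as [_ HG1].
  destruct (Gamma_spec (INR n + beta)) as [_ HG2]; [lra|].
  assert (0 < INR n ^ n) by (apply pow_lt; auto).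
  rewrite ln_div, ln_mult, ln_pow, Rplus_comm, ln_Gamma_shift;
    auto; [|apply Rmult_lt_0_compat; auto].
  unfold LP. rewrite (rsum_ext n (fun t => ln (INR t + beta)) (fun i => ln (beta + INR i)))
    by (intros; rewrite Rplus_comm; auto). ring.
Qed.

Lemma LP_stirling n beta : 0 < beta ->
  LP n beta = (INR n + beta - / 2) * ln (INR n + beta) - INR n - (beta - / 2) * ln beta
              - rsum n (fun t => dd (beta + INR t)).
Proof.
  intros Hb. unfold LP. induction n; [simpl; rewrite Rplus_0_l; ring|].
  rewrite !rsum_S, IHn, S_INR. pose proof (pos_INR n). unfold dd.
  replace (INR n + 1 + beta) with (beta + INR n + 1) by ring.
  replace (INR n + beta) with (beta + INR n) by ring. field.
Qed.

Lemma sum_dd_le n beta : 1 <= beta ->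
  rsum n (fun t => dd (beta + INR t)) <= 1 - stirling_const.
Proof.
  intros Hb. eapply Rle_trans.
  - apply (rsum_le n _ (fun t => dd (1 + INR t))). intros t _. pose proof (pos_INR t).
    apply dd_decr; lra.
  - rewrite sum_dd_from1. pose proof (stirling (S n) ltac:(lia)). lra.
Qed.

Lemma sumA_la_bounds D n x :
  0 <= sumA D n x (fun j => la (cnt x n j) - stirling_const)
     <= (1 - stirling_const) * INR (msize D n x).
Proof.
  rewrite <- sumA_const. split.
  - rewrite <- (Rmult_0_l (INR (msize D n x))), <- sumA_const. apply sumA_le.
    intros j _ Hj. pose proof (stirling (cnt x n j) Hj). lra.
  - apply sumA_le. intros j _ Hj. pose proof (la_le1 (cnt x n j) Hj). lra.
Qed.

Lemma sum_dd_nonneg n beta : 0 < beta -> 0 <= rsum n (fun t => dd (beta + INR t)).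
Proof.
  intros Hb. rewrite <- (Rmult_0_l (INR n)), <- rsum_const. apply rsum_le.
  intros t _. apply dd_nonneg. pose proof (pos_INR t). lra.
Qed.

Section Redundancy.
Variables (D n : nat) (x : nat -> nat) (w : nat -> nat -> R) (beta : R).
Hypothesis Hbeta : 0 < beta.
Hypothesis Hn : (1 <= n)%nat.
Hypothesis Hx : forall t, (t < n)%nat -> (x t < D)%nat.
Hypothesis Hw : weights_ok D n x w.

Lemma RS_exact : RS D beta w x n =
  CLw w x n - INR (msize D n x) * ln beta
  + sumA D n x (fun j => ln (INR (cnt x n j) ^ (cnt x n j) / Gamma (INR (cnt x n j))))
  + ln (Gamma (INR n + beta) / (INR n ^ n * Gamma beta)).
Proof.
  rewrite (RS_eq D n x w beta), (ln_Sbeta D n x w beta), ln_Gamma_ratio by auto.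
  rewrite (sumA_ext D n x
             (fun j => ln (INR (cnt x n j) ^ (cnt x n j) / Gamma (INR (cnt x n j))))
             (fun j => INR (cnt x n j) * ln (INR (cnt x n j)) - lfact (cnt x n j - 1)))
    by (intros; apply ln_pow_div_Gamma; lia).
  rewrite sumA_minus. ring.
Qed.

Lemma RS_remainder : RS D beta w x n =
  RSbar D beta w x n - sumA D n x (fun j => la (cnt x n j) - stirling_const)
  - rsum n (fun t => dd (beta + INR t)) - (1 - stirling_const).
Proof.
  pose proof (INR_pos1 n Hn) as Hnp. pose proof PI_RGT_0.
  rewrite RS_exact, ln_Gamma_ratio, LP_stirling by auto.
  rewrite (sumA_ext D n x
             (fun j => ln (INR (cnt x n j) ^ (cnt x n j) / Gamma (INR (cnt x n j))))
             (fun j => INR (cnt x n j) + / 2 * ln (INR (cnt x n j))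
                                      - (la (cnt x n j) - stirling_const) - stirling_const))
    by (intros; rewrite ln_pow_div_Gamma, lfact_pred_la by lia; ring).
  rewrite !sumA_minus, sumA_plus, sumA_cnt, !sumA_const by auto.
  unfold RSbar. fold stirling_const.
  rewrite (sumA_ext D n x (fun j => / 2 * ln (INR (cnt x n j) / (2 * PI)))
             (fun j => / 2 * ln (INR (cnt x n j)) - stirling_const)).
  2:{ intros j _ Hj. pose proof (lt_0_INR _ Hj).
      rewrite stirling_const_half_ln, ln_div by lra. ring. }
  rewrite sumA_minus, sumA_const.
  replace (1 + beta / INR n) with ((INR n + beta) / INR n) by (field; lra).
  replace (INR n / beta + 1) with ((INR n + beta) / beta) by (field; lra).
  rewrite !ln_div by lra. ring.
Qed.

End Redundancy.

Theorem proposition1 (D n : nat) (x : nat -> nat) (w : nat -> nat -> R) (beta : R)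
  (Hbeta : 0 < beta) (Hn : (1 <= n)%nat)
  (Hx : forall t, (t < n)%nat -> (x t < D)%nat)
  (Hw : weights_ok D n x w) :
  RS D beta w x n =
    CLw w x n - INR (msize D n x) * ln beta
    + sumA D n x (fun j => ln (INR (cnt x n j) ^ (cnt x n j) / Gamma (INR (cnt x n j))))
    + ln (Gamma (INR n + beta) / (INR n ^ n * Gamma beta))
  /\ RS D beta w x n <= RSbar D beta w x n
  /\ (1 <= beta ->
      RSbar D beta w x n - (1 - ln (sqrt (2 * PI))) * (INR (msize D n x) + 2)
        <= RS D beta w x n).
Proof.
  fold stirling_const.
  pose proof (RS_remainder D n x w beta Hbeta Hn Hx Hw) as Hrem.
  pose proof (sumA_la_bounds D n x) as HSA.
  pose proof (sum_dd_nonneg n beta Hbeta) as HSD.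
  pose proof stirling_const_le1.
  split; [|split].
  - apply RS_exact; auto.
  - lra.
  - intros Hb1. pose proof (sum_dd_le n beta Hb1). lra.
Qed.
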